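(* Let $r\in\mathbb{Z}$ and let $P_{n,k}(r)=[x^n]\,\frac{1+rx^2}{1+x^2}\left(\frac{x}{1+x^2}\right)^k$ for $n,k\ge 0$. Then for all $n\ge 0$, $$P_{2n,n}(r)=0^n-(r-3)(-1)^{\frac{n}{2}}\binom{\frac{3n}{2}-1}{\frac{n}{2}-1}\frac{1+(-1)^n}{2},$$ and alternatively $$P_{2n,n}(r)=(r-2)\,0^n -(r-3)(-1)^{\frac{n}{2}}\binom{\frac{3n}{2}-1}{n}\frac{1+(-1)^n}{2},$$ where the terms carrying the factor $\frac{1+(-1)^n}{2}$ are interpreted as $0$ when $n$ is odd.
   Context: $[x^n]h(x)$ denotes the coefficient of $x^n$ in $h(x)$. $0^m$ equals $1$ if $m=0$ and $0$ otherwise. For integers $a$ and $k$, $\binom{a}{k}=\frac{a(a-1)\cdots(a-k+1)}{k!}$ if $k\ge 0$ and $\binom{a}{k}=0$ if $k<0$ (so $\binom{-1}{-1}=0$, $\binom{-1}{0}=1$). The $P_{n,k}(r)$ form the coefficient array of the restricted Chebyshev–Boubaker polynomials $P_n(x;r)=\sum_k P_{n,k}(r)x^k$. *)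

From mathcomp Require Import all_boot all_order all_algebra.
Set Implicit Arguments. Unset Strict Implicit. Unset Printing Implicit Defensive.
Import Order.TTheory GRing.Theory Num.Theory.
Local Open Scope ring_scope.

(* Formal power series over int, represented by their coefficient sequence:
   fps_coef-wise, h n = [x^n] h. *)
Definition fps := nat -> int.

Definition fps_cst (c : int) : fps := fun n => if n == 0%N then c else 0.
Definition fps_X : fps := fun n => if n == 1%N then 1 else 0.
Definition fps_add (f g : fps) : fps := fun n => f n + g n.
Definition fps_sub (f g : fps) : fps := fun n => f n - g n.
Definition fps_scale (c : int) (f : fps) : fps := fun n => c * f n.
Definition fps_mul (f g : fps) : fps :=
  fun n => \sum_(i < n.+1) f i * g (n - i)%N.
Definition fps_exp (f : fps) (k : nat) : fps := iter k (fps_mul f) (fps_cst 1).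
(* Multiplicative inverse of a series with constant term 1:
   1/f = sum_j (1 - f)^j, where for the coefficient of x^n only j <= n matter. *)
Definition fps_inv (f : fps) : fps :=
  fun n => \sum_(j < n.+1) fps_exp (fps_sub (fps_cst 1) f) j n.

Definition one_plus_x2 : fps := fps_add (fps_cst 1) (fps_mul fps_X fps_X).
Definition one_plus_rx2 (r : int) : fps :=
  fps_add (fps_cst 1) (fps_scale r (fps_mul fps_X fps_X)).

Definition P (n k : nat) (r : int) : int :=
  fps_mul (fps_mul (one_plus_rx2 r) (fps_inv one_plus_x2))
          (fps_exp (fps_mul fps_X (fps_inv one_plus_x2)) k) n.

Definition gbinom (a k : int) : rat :=
  if k < 0 then 0
  else (\prod_(i < `|k|%N) (a - (i : nat)%:Z)%:~R) / (`|k|%N)`!%:R.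

(* Since 1/(1+x^2) = sum_j (-1)^j x^(2j), we get
   P_{n+k,k}(r) = [x^n] (1+rx^2)(1+x^2)^-(k+1), and the Pascal rule shows
   [x^(2j)] (1+x^2)^-(k+1) = (-1)^j C(k+j, j) while odd coefficients vanish.
   For n = 2j > 0 the two contributions (-1)^j C(3j, j) and
   r (-1)^(j-1) C(3j-1, j-1) combine through C(3j, j) = 3 C(3j-1, j-1).
   The ring laws of the Cauchy product are inherited from {poly int}:
   truncation below degree N commutes with products up to take_poly N. *)

From mathcomp Require Import all_boot all_order all_algebra.
From mathcomp Require Import zify ring.
From Stdlib Require Import FunctionalExtensionality.
Import Order.TTheory GRing.Theory Num.Theory.
Local Open Scope ring_scope.

Definition fps_trunc (N : nat) (f : fps) : {poly int} := \poly_(i < N) f i.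

Lemma fps_trunc_inj f g : (forall N, fps_trunc N f = fps_trunc N g) -> f = g.
Proof.
move=> eq_fg; apply: functional_extensionality => n.
by have := congr1 (fun p : {poly int} => p`_n) (eq_fg n.+1); rewrite /= !coef_poly ltnSn.
Qed.

Lemma fps_trunc_mul N f g :
  fps_trunc N (fps_mul f g) = take_poly N (fps_trunc N f * fps_trunc N g).
Proof.
apply/polyP => n; rewrite coef_take_poly coef_poly; case: ifP => // ltnN.
rewrite coefM; apply: eq_bigr => i _; rewrite !coef_poly.
by rewrite (leq_ltn_trans (leq_ord i)) ?(leq_ltn_trans (leq_subr i n)).
Qed.

Lemma take_polyMr (R : nzSemiRingType) N (p q : {poly R}) :
  take_poly N (p * take_poly N q) = take_poly N (p * q).
Proof.
rewrite -{2}(poly_take_drop N q) mulrDr mulrA take_polyD take_polyMXn_0.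
by rewrite addr0.
Qed.

Lemma fps_mulC f g : fps_mul f g = fps_mul g f.
Proof. by apply: fps_trunc_inj => N; rewrite !fps_trunc_mul mulrC. Qed.

Lemma fps_mulA f g h : fps_mul f (fps_mul g h) = fps_mul (fps_mul f g) h.
Proof.
apply: fps_trunc_inj => N; rewrite !fps_trunc_mul take_polyMr mulrA.
by rewrite [in RHS]mulrC take_polyMr mulrC.
Qed.

Lemma fps_mulDl f g h :
  fps_mul (fps_add f g) h = fps_add (fps_mul f h) (fps_mul g h).
Proof.
apply: functional_extensionality => n.
by rewrite /fps_add /fps_mul -big_split; apply: eq_bigr => i _; rewrite mulrDl.
Qed.

Definition fps_monomial (c : int) (a : nat) : fps :=
  fun n => if n == a then c else 0.

Lemma fps_mul_monomiall c a g n :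
  fps_mul (fps_monomial c a) g n = if (a <= n)%N then c * g (n - a)%N else 0.
Proof.
rewrite /fps_mul /fps_monomial; case: leqP => [le_an | lt_na].
  rewrite (bigD1 (Ordinal (le_an : (a < n.+1)%N))) //= eqxx big1 ?addr0 //.
  by move=> i; rewrite -val_eqE /= => /negbTE ->; rewrite mul0r.
rewrite big1 // => i _; case: eqP => [eq_ia | _]; last by rewrite mul0r.
by have := ltn_ord i; rewrite eq_ia ltnS leqNgt lt_na.
Qed.

Lemma fps_mul1l g : fps_mul (fps_cst 1) g = g.
Proof.
apply: functional_extensionality => n.
by rewrite (fps_mul_monomiall 1 0) subn0 mul1r.
Qed.

Lemma fps_monomialM c d a b :
  fps_mul (fps_monomial c a) (fps_monomial d b) = fps_monomial (c * d) (a + b).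
Proof.
apply: functional_extensionality => n; rewrite fps_mul_monomiall /fps_monomial.
case: leqP => le_an; last by case: eqP => //; lia.
by case: eqP => e; case: eqP => e' //; lia.
Qed.

Lemma fps_monomialX c a j :
  fps_exp (fps_monomial c a) j = fps_monomial (c ^+ j) (a * j).
Proof.
elim: j => [|j IHj]; first by rewrite muln0.
by rewrite /fps_exp iterS -/(fps_exp _ j) IHj fps_monomialM exprS mulnS.
Qed.

Lemma fps_expMn f g k :
  fps_exp (fps_mul f g) k = fps_mul (fps_exp f k) (fps_exp g k).
Proof.
elim: k => [|k IHk]; first by rewrite /fps_exp /= fps_mul1l.
rewrite /fps_exp !iterS -!/(fps_exp _ k) IHk !fps_mulA; congr fps_mul.
by rewrite -!fps_mulA (fps_mulC g).
Qed.

Lemma fps_X2E : fps_mul fps_X fps_X = fps_monomial 1 2.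
Proof. exact: (fps_monomialM 1 1 1 1). Qed.

Lemma one_plus_x2E : one_plus_x2 = fps_add (fps_monomial 1 0) (fps_monomial 1 2).
Proof. by rewrite /one_plus_x2 fps_X2E. Qed.

Lemma one_plus_rx2E r :
  one_plus_rx2 r = fps_add (fps_monomial 1 0) (fps_monomial r 2).
Proof.
apply: functional_extensionality => n.
rewrite /one_plus_rx2 /fps_add /fps_scale fps_X2E /fps_monomial.
by case: (n == 2)%N; rewrite ?mulr1 ?mulr0.
Qed.

Definition alt_even : fps := fun n => if odd n then 0 else (-1) ^+ n./2.

Lemma fps_inv_one_plus_x2 : fps_inv one_plus_x2 = alt_even.
Proof.
rewrite /fps_inv; have -> : fps_sub (fps_cst 1) one_plus_x2 = fps_monomial (-1) 2.
  apply: functional_extensionality => n.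
  rewrite /fps_sub one_plus_x2E /fps_add /fps_cst /fps_monomial.
  by case: (n =P 0)%N => [-> | _] //; case: (n == 2)%N; rewrite ?subrr ?sub0r.
apply: functional_extensionality => n; rewrite /alt_even.
under eq_bigr => j _ do rewrite fps_monomialX /fps_monomial.
case: (boolP (odd n)) => [odd_n | even_n].
  by rewrite big1 // => j _; case: eqP => // eq_n; rewrite eq_n oddM in odd_n.
have n_double : n = (2 * n./2)%N.
  by rewrite -{1}(odd_double_half n) (negbTE even_n) mul2n.
have lt_half : (n./2 < n.+1)%N by rewrite ltnS -divn2 leq_div.
rewrite (bigD1 (Ordinal lt_half)) //= -n_double eqxx big1 ?addr0 //.
move=> i; rewrite -val_eqE /= => /eqP ne_i; case: eqP => // eq_n.
by case: ne_i; rewrite [in RHS]eq_n mul2n doubleK.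
Qed.

Lemma one_plus_x2_mul_alt_even : fps_mul one_plus_x2 alt_even = fps_cst 1.
Proof.
apply: functional_extensionality => n.
rewrite one_plus_x2E fps_mulDl /fps_add !fps_mul_monomiall /alt_even /fps_cst.
case: n => [|[|n]] //=; rewrite subn2 /= !mul1r negbK.
by case: (odd n) => //=; rewrite exprS mulN1r addNr.
Qed.

Definition alt_even_exp_coef (k m : nat) : int :=
  if odd m then 0 else (-1) ^+ m./2 * ('C(k + m./2, m./2))%:Z.

Lemma alt_even_exp_coef_double k j :
  alt_even_exp_coef k (2 * j) = (-1) ^+ j * ('C(k + j, j))%:Z.
Proof. by rewrite /alt_even_exp_coef mul2n odd_double doubleK. Qed.

Lemma alt_even_exp_coef_rec k m :
  alt_even_exp_coef k.+1 m =
  alt_even_exp_coef k m - (if (2 <= m)%N then alt_even_exp_coef k.+1 (m - 2)%N else 0).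
Proof.
rewrite /alt_even_exp_coef; case: m => [|[|m]] //=; first by rewrite !bin0 subr0.
rewrite subn2 /= negbK; case: (odd m) => /=; first by rewrite subr0.
rewrite addSn !addnS binS PoszD exprS; ring.
Qed.

Lemma fps_exp_alt_evenS k m :
  fps_exp alt_even k.+2 m =
  fps_exp alt_even k.+1 m - (if (2 <= m)%N then fps_exp alt_even k.+2 (m - 2)%N else 0).
Proof.
have one_plus_x2_mul_exp : fps_mul one_plus_x2 (fps_exp alt_even k.+2) = fps_exp alt_even k.+1.
  by rewrite {1}/fps_exp iterS fps_mulA one_plus_x2_mul_alt_even fps_mul1l.
have := congr1 (fun f => f m) one_plus_x2_mul_exp.
rewrite /= one_plus_x2E fps_mulDl /fps_add !fps_mul_monomiall subn0 !mul1r /= => <-.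
by rewrite addrK.
Qed.

Lemma fps_exp_alt_evenE k m : fps_exp alt_even k.+1 m = alt_even_exp_coef k m.
Proof.
elim: k m => [|k IHk] m.
  rewrite /fps_exp /= fps_mulC fps_mul1l /alt_even /alt_even_exp_coef.
  by rewrite add0n binn mulr1.
elim/ltn_ind: m => m IHm; rewrite fps_exp_alt_evenS alt_even_exp_coef_rec IHk.
by case: ifP => // le2m; rewrite IHm //; lia.
Qed.

Lemma P_addn n k r :
  P (n + k) k r = fps_mul (one_plus_rx2 r) (fps_exp alt_even k.+1) n.
Proof.
rewrite /P fps_inv_one_plus_x2 fps_expMn (fps_monomialX 1 1) mul1n expr1n.
rewrite fps_mulC -fps_mulA fps_mul_monomiall leq_addl addnK mul1r.
by rewrite fps_mulC -fps_mulA.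
Qed.

Lemma P_addnE n k r :
  P (n + k) k r =
  alt_even_exp_coef k n + (if (2 <= n)%N then r * alt_even_exp_coef k (n - 2) else 0).
Proof.
rewrite P_addn one_plus_rx2E fps_mulDl /fps_add !fps_mul_monomiall subn0 mul1r.
by rewrite !fps_exp_alt_evenE.
Qed.

Lemma P_odd n k r : odd n -> P (n + k) k r = 0.
Proof.
move=> odd_n; rewrite P_addnE /alt_even_exp_coef odd_n add0r.
by case: ifP => // le2n; rewrite oddB // odd_n /= mulr0.
Qed.

Lemma bin_triple p : 'C(3 * p.+1, p.+1) = (3 * 'C(3 * p + 2, p))%N.
Proof.
have := mul_bin_diag (3 * p.+1) p.
rewrite (_ : (3 * p.+1).-1 = 3 * p + 2)%N; last by lia.
by rewrite mulnAC [(p.+1 * _)%N]mulnC => /eqP; rewrite eqn_pmul2r // => /eqP <-.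
Qed.

Lemma P_double_even p r :
  P (p.+1.*2 + p.+1.*2) p.+1.*2 r =
  - (r - 3) * (-1) ^+ p.+1 * ('C(3 * p + 2, p))%:Z.
Proof.
rewrite P_addnE -!mul2n ifT; last by lia.
rewrite (_ : 2 * p.+1 - 2 = 2 * p)%N; last by lia.
rewrite !alt_even_exp_coef_double (_ : 2 * p.+1 + p.+1 = 3 * p.+1)%N; last by lia.
rewrite (_ : 2 * p.+1 + p = 3 * p + 2)%N; last by lia.
by rewrite bin_triple PoszM exprS; ring.
Qed.

Lemma gbinom_nat (a k : nat) : (k <= a)%N -> gbinom a%:Z k%:Z = ('C(a, k))%:R.
Proof.
move=> le_ka; rewrite /gbinom /=.
rewrite (eq_bigr (fun i : 'I_k => ((a - i)%N)%:R)); last first.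
  by move=> i _; rewrite subzn //; apply: leq_trans (ltnW (ltn_ord i)) le_ka.
rewrite -natr_prod -ffact_prod -bin_ffact natrM mulfK //.
by rewrite pnatr_eq0 -lt0n fact_gt0.
Qed.

Theorem mainTheorem3 (r : int) (n : nat) :
  ((P (2 * n) n r)%:~R : rat) =
    (0 : rat) ^+ n
    - (r - 3)%:~R * (-1) ^+ (n./2)
        * gbinom ((3 * n)./2%:Z - 1) ((n./2)%:Z - 1)
        * ((1 + (-1) ^+ n) / 2)
  /\
  ((P (2 * n) n r)%:~R : rat) =
    (r - 2)%:~R * (0 : rat) ^+ n
    - (r - 3)%:~R * (-1) ^+ (n./2)
        * gbinom ((3 * n)./2%:Z - 1) (n%:Z)
        * ((1 + (-1) ^+ n) / 2).
Proof.
rewrite mul2n -addnn; case: (boolP (odd n)) => [odd_n | even_n].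
  have sign_n : (1 + (-1) ^+ n : rat) = 0 by rewrite -signr_odd odd_n addrN.
  by rewrite P_odd // sign_n expr0n gtn_eqF ?odd_gt0 // mul0r !mulr0 !subr0.
rewrite -(odd_double_half n) (negbTE even_n) add0n.
case: n./2 => [|p].
  have -> : P (0 + 0) 0 r = 1 by rewrite P_addnE /alt_even_exp_coef /= bin0.
  by rewrite /gbinom /= big_ord0 fact0; split; field.
rewrite P_double_even (_ : 3 * p.+1.*2 = (3 * p + 3).*2)%N ?doubleK; last by lia.
rewrite (_ : (3 * p + 3)%N%:Z - 1 = (3 * p + 2)%N); last by lia.
rewrite (_ : p.+1%:Z - 1 = p); last by lia.
rewrite !gbinom_nat; [|lia|lia].
rewrite -(bin_sub (_ : p.+1.*2 <= 3 * p + 2)%N); last by lia.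
rewrite (_ : (3 * p + 2 - p.+1.*2 = p)%N); last by lia.
have sign_even : (-1) ^+ p.+1.*2 = 1 :> rat by rewrite -signr_odd odd_double.
rewrite sign_even expr0n /= !rmorphM /= rmorphXn rmorphN rmorphN1.
by split; field.
Qed.
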